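(* Let $T_1$ be a quadtree in $\mathbb{R}^d$ with $n$ cells, where the dimension $d$ is a constant. Then its extended quadtree $T^*$ has $\mathcal{O}(n)$ cells.
   Context: A quadtree on an axis-aligned root hypercube $R\subset\mathbb{R}^d$ is a hierarchical decomposition in which every node has an associated axis-aligned hypercube (cell) and is either a leaf or has $2^d$ equal-sized children whose cells subdivide its cell. The size $|C|$ of a cell is its edge length. Two cells are neighbors if they are interior-disjoint and share (part of) a $(d-1)$-dimensional facet. For an integer $j$, a cell $C$ is $2^j$-smooth if every leaf neighboring $C$ has size at most $2^j|C|$. Extended quadtree: the cells of $T_1$ get brand $1$. Recursively, for $j\ge1$, let $T^j$ be the quadtree formed by $\bigcup_{i\le j}T_i$, and let $T_{j+1}$ be the minimal set of cells obtained by splitting cells of $T^j$ such that every cell of $T_j$ is $2^j$-smooth in the resulting quadtree; the cells of $T_{j+1}$ get brand $j+1$. The extended quadtree is $T^*=T^{d+1}$. *)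

From mathcomp Require Import all_boot all_order.
From mathcomp Require Export finmap.
Set Implicit Arguments. Unset Strict Implicit. Unset Printing Implicit Defensive.
Local Open Scope fset_scope.

(* Root hypercube R normalized (by translation/scaling) to [0,1]^d.
   A cell (k, a) is the dyadic cube  prod_i [a_i 2^-k, (a_i+1) 2^-k],
   of edge length |C| = 2^-k ("level" k). *)
Definition cell (d : nat) : Type := (nat * {ffun 'I_d -> nat})%type.

Definition level {d} (c : cell d) : nat := c.1.

Definition valid_cell {d} (c : cell d) : Prop := forall i, c.2 i < 2 ^ c.1.

Definition root_cell (d : nat) : cell d := (0, [ffun _ => 0]).

Definition parent {d} (c : cell d) : cell d := (c.1.-1, [ffun i => (c.2 i)./2]).

Definition is_child {d} (c c' : cell d) : Prop :=
  c'.1 = c.1.+1 /\ forall i, (c'.2 i)./2 = c.2 i.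

Definition quadtree {d} (Q : {fset cell d}) : Prop :=
  [/\ root_cell d \in Q,
      (forall c, c \in Q -> valid_cell c),
      (forall c, c \in Q -> 0 < c.1 -> parent c \in Q) &
      (forall c, c \in Q ->
         (forall c', is_child c c' -> c' \in Q) \/
         (forall c', is_child c c' -> c' \notin Q))].

Definition is_leaf {d} (Q : {fset cell d}) (c : cell d) : Prop :=
  c \in Q /\ forall c', is_child c c' -> c' \notin Q.

(* Integer endpoints of the cell on the grid of mesh 2^-K (K >= level). *)
Definition lo {d} (c : cell d) (K : nat) (i : 'I_d) : nat := c.2 i * 2 ^ (K - c.1).
Definition hi {d} (c : cell d) (K : nat) (i : 'I_d) : nat := (c.2 i).+1 * 2 ^ (K - c.1).

(* Two cells are neighbors iff they are interior-disjoint and share a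
   (d-1)-dimensional piece of a facet: in exactly one coordinate direction
   their intervals touch at an endpoint, in all others they overlap with
   positive length. *)
Definition neighbors {d} (c c' : cell d) : Prop :=
  let K := maxn c.1 c'.1 in
  exists i : 'I_d,
    (hi c K i = lo c' K i \/ hi c' K i = lo c K i) /\
    forall j : 'I_d, j != i -> lo c K j < hi c' K j /\ lo c' K j < hi c K j.

(* C is 2^j-smooth in Q: every leaf L of Q neighboring C has
   |L| <= 2^j |C|, i.e. 2^-(level L) <= 2^(j - level C). *)
Definition smooth {d} (Q : {fset cell d}) (j : nat) (C : cell d) : Prop :=
  forall L, is_leaf Q L -> neighbors L C -> level C <= level L + j.

(* One step of the construction: Tnext = T^{j+1} is the minimal
   refinement (quadtree containing Tcur = T^j) in which every cell of
   T_j = T^j \ T^{j-1} (Tprev = T^{j-1}) is 2^j-smooth. *)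
Definition ext_step {d} (Tprev Tcur Tnext : {fset cell d}) (j : nat) : Prop :=
  [/\ quadtree Tnext, Tcur `<=` Tnext,
      (forall C, C \in Tcur `\` Tprev -> smooth Tnext j C) &
      (forall Q, quadtree Q -> Tcur `<=` Q ->
         (forall C, C \in Tcur `\` Tprev -> smooth Q j C) -> Tnext `<=` Q)].

(* Ts j = T^j  (Ts 0 = empty, Ts 1 = T_1);  the extended quadtree is
   T^* = Ts d.+1. *)
Definition extended_seq {d} (T1 : {fset cell d}) (Ts : nat -> {fset cell d}) : Prop :=
  [/\ Ts 0 = fset0, Ts 1 = T1 &
      forall j, 1 <= j <= d -> ext_step (Ts j.-1) (Ts j) (Ts j.+1) j].

From mathcomp Require Import all_boot all_order finmap zify.
From Stdlib Require Import Classical ClassicalEpsilon.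
Set Implicit Arguments. Unset Strict Implicit. Unset Printing Implicit Defensive.
Local Open Scope fset_scope.

(* Each step of the construction stays inside the padding of the current tree
   T: the same-level cells in the 3^d blocks around the cells of T, together
   with all their children.  The padding is a quadtree in which every cell C
   of T is already 1-smooth: a coarser leaf touching C would contain the
   same-size neighbour of C, which is subdivided in the padding.  Admissible
   refinements are closed under intersection, so the minimal one exists and
   lies inside the padding; hence each of the d steps multiplies the number of
   cells by at most 3^d (2^d + 1). *)

Lemma meet_closed_least (K : choiceType) (P : {fset K} -> Prop) :
  (forall A B, P A -> P B -> P (A `&` B)) ->
  forall A, P A -> exists2 M, P M & forall B, P B -> M `<=` B.
Proof.
move=> PI A; have [n] := ubnP #|` A|; elim: n A => // n IH A ltAn PA.
have [least|] := classic (forall B, P B -> A `<=` B); first by exists A.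
move=> /not_all_ex_not [B /(imply_to_and (P B)) [PB not_AB]].
apply: (IH (A `&` B)); last exact: PI.
have : A `&` B `<` A by rewrite fproperE fsubsetIl fsubsetI fsubset_refl; apply/negP.
by move/fproper_ltn_card; lia.
Qed.

Section Padding.
Variable d : nat.
Implicit Types (T A Q : {fset cell d}) (c x B C L : cell d).

Definition validb c : bool := [forall i, c.2 i < 2 ^ c.1].

Lemma validP c : reflect (valid_cell c) (validb c).
Proof. exact: forallP. Qed.

Definition near x C : Prop :=
  x.1 = C.1 /\ forall j, C.2 j <= (x.2 j).+1 /\ x.2 j <= (C.2 j).+1.

(* The offset [o j : 'I_3] stands for [o j - 1]; at the lower boundary the
   truncated subtraction merely produces a cell twice. *)
Definition shift C (o : {ffun 'I_d -> 'I_3}) : cell d :=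
  (C.1, [ffun j => (C.2 j + o j - 1)%N]).

Definition neighborhood T : {fset cell d} :=
  [fset x in [seq x <- [seq shift C o | C <- T, o <- enum {ffun 'I_d -> 'I_3}]
             | validb x]].

Definition child_cell c (b : {ffun 'I_d -> bool}) : cell d :=
  (c.1.+1, [ffun j => (2 * c.2 j + b j)%N]).

Definition children A : {fset cell d} :=
  [fset x in [seq child_cell c b | c <- A, b <- enum {ffun 'I_d -> bool}]].

Definition padding T : {fset cell d} := neighborhood T `|` children (neighborhood T).

Definition padding_factor : nat := 3 ^ d * (2 ^ d).+1.

Lemma mem_neighborhood T x :
  x \in neighborhood T <-> valid_cell x /\ exists2 C, C \in T & near x C.
Proof.
rewrite inE mem_filter; split.
- case/andP => /validP vx /allpairsP [[C o] /= [CT _ ex]]; subst x.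
  split => //; exists C => //; split => // j.
  by rewrite ffunE; case: (o j) => t /=; lia.
- case=> /validP vx [C CT [ex hx]]; rewrite vx; apply/allpairsP.
  exists (C, [ffun j => inord ((x.2 j).+1 - C.2 j)]); split; rewrite ?mem_enum //=.
  case: x {vx} ex hx => k f /= -> hx; congr pair; apply/ffunP => j.
  by rewrite !ffunE inordK; have := hx j; move: (f j) (C.2 j) => u v; lia.
Qed.

Lemma mem_children A x :
  x \in children A <-> exists2 c, c \in A & exists b, x = child_cell c b.
Proof.
rewrite inE; split.
- by case/allpairsP => [[c b] /= [cA _ ->]]; exists c => //; exists b.
- by case=> c cA [b ->]; apply/allpairsP; exists (c, b); rewrite mem_enum.
Qed.

Lemma card_neighborhood T : #|` neighborhood T| <= 3 ^ d * #|` T|.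
Proof.
rewrite card_fseq (leq_trans (size_undup _)) // size_filter.
rewrite (leq_trans (count_size _ _)) // size_allpairs -cardE card_ffun !card_ord.
by rewrite mulnC.
Qed.

Lemma card_children A : #|` children A| <= 2 ^ d * #|` A|.
Proof.
rewrite card_fseq (leq_trans (size_undup _)) // size_allpairs -cardE.
by rewrite card_ffun card_bool card_ord mulnC.
Qed.

Lemma card_padding T : #|` padding T| <= padding_factor * #|` T|.
Proof.
rewrite (leq_trans (leq_card_fsetU _ _)) //.
rewrite (leq_trans (leq_add (leqnn _) (card_children _))) //.
by rewrite -mulSn mulnC mulnAC leq_mul2r card_neighborhood orbT.
Qed.

Lemma is_child_child_cell c b : is_child c (child_cell c b).
Proof. by split => // i; rewrite ffunE; lia. Qed.

Lemma is_childE {c c'} : is_child c c' -> c' = child_cell c [ffun i => odd (c'.2 i)].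
Proof.
case: c c' => k a [k' a'] [/= -> ha]; congr pair.
by apply/ffunP => i; rewrite !ffunE -ha addnC mul2n odd_double_half.
Qed.

Lemma is_child_parent {c c'} : is_child c c' -> parent c' = c.
Proof.
case: c c' => k a [k' a'] [/= -> ha]; rewrite /parent /=; congr pair.
by apply/ffunP => i; rewrite ffunE ha.
Qed.

Lemma valid_parent x : valid_cell x -> valid_cell (parent x).
Proof.
case: x => [[|k] a] vx i; rewrite /parent ffunE /=; have := vx i; rewrite /= ?expnS; lia.
Qed.

Lemma valid_child_cell c b : valid_cell c -> valid_cell (child_cell c b).
Proof. by move=> vc i; rewrite /= ffunE expnS; have := vc i; lia. Qed.

Lemma near_parent x C : near x C -> near (parent x) (parent C).
Proof. by case=> ex hx; split => [|j]; rewrite /= ?ex // !ffunE; have := hx j; lia. Qed.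

Lemma neighborhood_parent T x : quadtree T ->
  x \in neighborhood T -> 0 < x.1 -> parent x \in neighborhood T.
Proof.
case=> _ _ parT _ /mem_neighborhood [vx [C CT nxC]] x_gt0.
apply/mem_neighborhood; split; first exact: valid_parent.
by exists (parent C); [apply: parT; rewrite // -nxC.1 | exact: near_parent].
Qed.

Lemma padding_parent T x : quadtree T ->
  x \in padding T -> 0 < x.1 -> parent x \in neighborhood T.
Proof.
move=> qT; rewrite in_fsetU => /orP [xN|/mem_children [c cN [b ->]]] x_gt0.
  exact: neighborhood_parent.
by rewrite (is_child_parent (is_child_child_cell c b)).
Qed.

Lemma quadtree_padding {T} : quadtree T -> quadtree (padding T).
Proof.
move=> qT; have [rootT _ _ _] := qT.
have sub_NP : {subset neighborhood T <= padding T} by move=> x xN; rewrite in_fsetU xN.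
split.
- apply/sub_NP/mem_neighborhood; split; first by move=> i; rewrite ffunE.
  by exists (root_cell d) => //; split => // j; rewrite ffunE.
- move=> c; rewrite in_fsetU => /orP [/mem_neighborhood [] //|].
  by case/mem_children => c' /mem_neighborhood [vc' _] [b ->]; apply: valid_child_cell.
- by move=> c cP c_gt0; apply/sub_NP/padding_parent.
- move=> c _; case cN: (c \in neighborhood T); [left | right] => c' cc'.
    rewrite (is_childE cc') in_fsetU; apply/orP; right.
    by apply/mem_children; exists c => //; eexists.
  apply: contraFN cN => c'P; rewrite -(is_child_parent cc').
  by apply: padding_parent; rewrite // cc'.1.
Qed.

Lemma sub_padding T : quadtree T -> T `<=` padding T.
Proof.
case=> _ validT _ _; apply/fsubsetP => C CT; rewrite in_fsetU; apply/orP; left.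
apply/mem_neighborhood; split; first exact: validT.
by exists C => //; split.
Qed.

Definition ancestor (l : nat) c : cell d := (l, [ffun j => c.2 j %/ 2 ^ (c.1 - l)]).

Lemma ancestor_id c : ancestor c.1 c = c.
Proof.
case: c => k a; rewrite /ancestor subnn; congr pair.
by apply/ffunP => j; rewrite ffunE divn1.
Qed.

Lemma ancestor_parent l c : l < c.1 -> ancestor l (parent c) = ancestor l c.
Proof.
move=> lt_lc; rewrite /ancestor; congr pair; apply/ffunP => j; rewrite !ffunE.
have -> : c.1 - l = (c.1.-1 - l).+1 by lia.
by rewrite expnS divnMA divn2.
Qed.

Lemma mem_ancestor {Q l c} : quadtree Q -> c \in Q -> l <= c.1 -> ancestor l c \in Q.
Proof.
case=> _ _ parQ _; move e: (c.1 - l) => n; elim: n c e => [|n IH] c e cQ le_lc.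
  have -> : l = c.1 by lia.
  by rewrite ancestor_id.
rewrite -ancestor_parent; last by lia.
by apply: IH; rewrite ?parQ //=; lia.
Qed.

Lemma is_child_ancestor {l c} : l < c.1 -> is_child (ancestor l c) (ancestor l.+1 c).
Proof.
move=> lt_lc; split => // j; rewrite !ffunE -divn2 -divnMA -expnSr.
by have -> : (c.1 - l.+1).+1 = c.1 - l by lia.
Qed.

Lemma valid_of_ancestor {l c} : l <= c.1 -> valid_cell (ancestor l c) -> valid_cell c.
Proof.
move=> le_lc va j; have := va j; rewrite /= ffunE ltn_divLR ?expn_gt0 //.
by rewrite -expnD subnKC.
Qed.

Lemma lo_le_hi c K i : lo c K i <= hi c K i.
Proof. by rewrite leq_mul2r leqnSn orbT. Qed.

Lemma neighbors_touch {c c'} : neighbors c c' -> forall j,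
  lo c (maxn c.1 c'.1) j <= hi c' (maxn c.1 c'.1) j /\
  lo c' (maxn c.1 c'.1) j <= hi c (maxn c.1 c'.1) j.
Proof.
case=> i [touch overlap] j; have [->|ne_ji] := eqVneq j i; last first.
  by have [? ?] := overlap j ne_ji; split; apply: ltnW.
move: touch (lo_le_hi c (maxn c.1 c'.1) i) (lo_le_hi c' (maxn c.1 c'.1) i).
move: (lo c _ i) (hi c _ i) (lo c' _ i) (hi c' _ i) => a b a' b'; lia.
Qed.

Lemma near_block {p a b} : 0 < p -> b * p <= a.+1 -> a <= b.+1 * p ->
  exists2 y, y %/ p = b & a <= y.+1 /\ y <= a.+1.
Proof.
move=> p_gt0 lo_a a_hi.
have block y : b * p <= y < b.+1 * p -> y %/ p = b.
  move=> /andP [? ?]; apply/eqP.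
  by rewrite eqn_leq -ltnS ltn_divLR // leq_divRL // andbC; apply/andP.
have [a_lt|a_ge] := ltnP a (b * p).
  by exists a.+1; [apply: block; rewrite mulSn; lia | lia].
have [a_top|a_lt] := eqVneq a (b.+1 * p).
  by exists a.-1; [apply: block; rewrite mulSn in a_top *; lia | lia].
by exists a; [apply: block; rewrite a_ge ltn_neqAle a_lt | lia].
Qed.

Lemma neighbors_coarse_near {L C} : neighbors L C -> L.1 < C.1 ->
  exists2 B, near B C & ancestor L.1 B = L.
Proof.
move=> nLC lt_LC; have p_gt0 : 0 < 2 ^ (C.1 - L.1) by rewrite expn_gt0.
have coord j : exists y, y %/ 2 ^ (C.1 - L.1) = L.2 j /\
    C.2 j <= y.+1 /\ y <= (C.2 j).+1.
  have [lo_hi hi_lo] := neighbors_touch nLC j.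
  rewrite /lo /hi (maxn_idPr (ltnW lt_LC)) subnn expn0 !muln1 in lo_hi hi_lo.
  by have [y ? ?] := near_block p_gt0 lo_hi hi_lo; exists y.
have [f hf] := fin_all_exists coord.
exists (C.1, [ffun j => f j]); first by split => // j; rewrite ffunE; case: (hf j).
move: L hf {nLC lt_LC p_gt0 coord} => [m b] /= hf; rewrite /ancestor /=; congr pair.
by apply/ffunP => j; rewrite !ffunE; case: (hf j).
Qed.

Lemma padding_leaf_level {T C L} : quadtree T -> C \in T ->
  is_leaf (padding T) L -> neighbors L C -> level C <= level L.
Proof.
move=> qT CT [LP leafL] nLC; rewrite /level leqNgt; apply/negP => lt_LC.
have [B nearBC ancB] := neighbors_coarse_near nLC lt_LC.
have lt_LB : L.1 < B.1 by rewrite nearBC.1.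
have qP := quadtree_padding qT; have [_ validQ _ _] := qP.
have BP : B \in padding T.
  rewrite in_fsetU; apply/orP; left; apply/mem_neighborhood; split; last by exists C.
  by apply: (valid_of_ancestor (ltnW lt_LB)); rewrite ancB; apply: validQ.
have := is_child_ancestor lt_LB; rewrite ancB => /leafL.
by rewrite (mem_ancestor qP BP lt_LB).
Qed.

Lemma smooth_padding T j C : quadtree T -> C \in T -> smooth (padding T) j C.
Proof.
move=> qT CT L leafL nLC.
exact: leq_trans (padding_leaf_level qT CT leafL nLC) (leq_addr _ _).
Qed.

End Padding.

Section Extension.
Variable d : nat.
Implicit Types (T Tprev Tcur Q : {fset cell d}) (L : cell d).

Lemma quadtreeI Q1 Q2 : quadtree Q1 -> quadtree Q2 -> quadtree (Q1 `&` Q2).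
Proof.
move=> [r1 v1 p1 c1] [r2 v2 p2 c2]; split.
- by rewrite in_fsetI r1 r2.
- by move=> c /fsetIP [/v1].
- by move=> c /fsetIP [h1 h2] c_gt0; rewrite in_fsetI p1 ?p2.
- move=> c /fsetIP [h1 h2].
  case: (c1 _ h1) => a1; last by right => c' /a1; rewrite in_fsetI => /negbTE ->.
  case: (c2 _ h2) => a2; last by right => c' /a2; rewrite in_fsetI andbC => /negbTE ->.
  by left => c' cc'; rewrite in_fsetI a1 ?a2.
Qed.

Lemma is_leafI Q1 Q2 L : quadtree Q1 -> quadtree Q2 ->
  is_leaf (Q1 `&` Q2) L -> is_leaf Q1 L \/ is_leaf Q2 L.
Proof.
move=> [_ _ _ c1] [_ _ _ c2] [/fsetIP [h1 h2] leafL].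
case: (c1 _ h1) => a1; last by left.
case: (c2 _ h2) => a2; last by right.
have Lc := is_child_child_cell L [ffun=> false].
by have := leafL _ Lc; rewrite in_fsetI a1 ?a2.
Qed.

Definition admissible Tprev Tcur (j : nat) Q : Prop :=
  [/\ quadtree Q, Tcur `<=` Q & forall C, C \in Tcur `\` Tprev -> smooth Q j C].

Lemma admissibleI Tprev Tcur j Q1 Q2 : admissible Tprev Tcur j Q1 ->
  admissible Tprev Tcur j Q2 -> admissible Tprev Tcur j (Q1 `&` Q2).
Proof.
move=> [q1 s1 m1] [q2 s2 m2]; split; first exact: quadtreeI.
  by rewrite fsubsetI s1 s2.
move=> C CT L /(is_leafI q1 q2) [] leafL nLC; [exact: m1 | exact: m2].
Qed.

Lemma admissible_padding Tprev Tcur j : quadtree Tcur ->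
  admissible Tprev Tcur j (padding Tcur).
Proof.
move=> qT; split; [exact: quadtree_padding | exact: sub_padding |].
by move=> C /fsetDP [CT _]; apply: smooth_padding.
Qed.

Lemma ext_step_exists Tprev Tcur j : quadtree Tcur ->
  exists Tn, ext_step Tprev Tcur Tn j.
Proof.
move=> qT; have [Tn [qTn sTn smTn] least] :=
  meet_closed_least (@admissibleI Tprev Tcur j) (admissible_padding Tprev j qT).
by exists Tn; split => // Q qQ sQ smQ; apply: least.
Qed.

Lemma card_ext_step Tprev Tcur Tn j : quadtree Tcur ->
  ext_step Tprev Tcur Tn j -> #|` Tn| <= padding_factor d * #|` Tcur|.
Proof.
move=> qT [_ _ _ least]; have [qP sP smP] := admissible_padding Tprev j qT.
exact: leq_trans (fsubset_leq_card (least _ qP sP smP)) (card_padding _).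
Qed.

Definition ext_next Tprev Tcur (j : nat) : {fset cell d} :=
  epsilon (inhabits fset0) (fun Tn => ext_step Tprev Tcur Tn j).

Lemma ext_nextP Tprev Tcur j : quadtree Tcur ->
  ext_step Tprev Tcur (ext_next Tprev Tcur j) j.
Proof. move=> qT; exact: epsilon_spec (ext_step_exists Tprev j qT). Qed.

Fixpoint ext_pair T1 (n : nat) : {fset cell d} * {fset cell d} :=
  if n is n'.+1 then let p := ext_pair T1 n' in (p.2, ext_next p.1 p.2 n)
  else (fset0, T1).

Definition ext_seq T1 (n : nat) : {fset cell d} := (ext_pair T1 n).1.

Lemma extended_seq_ext_seq T1 : quadtree T1 -> extended_seq T1 (ext_seq T1).
Proof.
move=> qT1; have qTs n : quadtree (ext_seq T1 n.+1).
  by elim: n => [//|n IH]; have [] := ext_nextP (ext_seq T1 n) n.+1 IH.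
by split => // -[//|j] _; apply: ext_nextP.
Qed.

Lemma card_extended_seq T1 Ts n : quadtree T1 -> extended_seq T1 Ts -> n <= d ->
  quadtree (Ts n.+1) /\ #|` Ts n.+1| <= padding_factor d ^ n * #|` T1|.
Proof.
move=> qT1 [_ Ts1 step]; elim: n => [|n IH] le_nd; first by rewrite Ts1 mul1n.
have [qTn cardTn] := IH (ltnW le_nd); have stepn := step n.+1 le_nd.
split; first by case: stepn.
by rewrite expnS -mulnA (leq_trans (card_ext_step qTn stepn)) // leq_mul2l cardTn orbT.
Qed.

End Extension.

Theorem corollary14 (d : nat) :
  exists C : nat, forall T1 : {fset cell d}, quadtree T1 ->
    (exists Ts, extended_seq T1 Ts) /\
    (forall Ts, extended_seq T1 Ts -> #|` Ts d.+1| <= C * #|` T1|).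
Proof.
exists (padding_factor d ^ d) => T1 qT1; split.
  by exists (ext_seq T1); apply: extended_seq_ext_seq.
by move=> Ts hTs; have [] := card_extended_seq qT1 hTs (leqnn d).
Qed.
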